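(* Let $(A,\mathfrak m)$ be a local ring, $B$ a ring, $f : A \to B$ a ring homomorphism and $J$ a proper ideal of $B$ with $J \subseteq \mathrm{Rad}(B)$. Assume that $J \subseteq f(A)$ and $f(\mathrm{Reg}(A)) = \mathrm{Reg}(B)$. Then $A \bowtie^f J$ is a Prüfer ring if and only if $A$ is a Prüfer ring and $J = f(a)J$ for all $a \in \mathfrak m \setminus Z(A)$.
   Context: All rings are commutative with identity. For a ring homomorphism $f:A\to B$ and an ideal $J$ of $B$, $A \bowtie^f J := \{(a, f(a)+j) : a \in A, j \in J\}$, a subring of $A\times B$. $Z(R)$ is the set of zero-divisors of $R$, $\mathrm{Reg}(R)=R\setminus Z(R)$ the set of regular elements, and $\mathrm{Rad}(B)$ the Jacobson radical of $B$. An ideal is regular if it contains a regular element. A ring $R$ is a Prüfer ring if every finitely generated regular ideal of $R$ is invertible. *)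

From HB Require Import structures.
From mathcomp Require Import all_boot all_order all_algebra.
Set Implicit Arguments. Unset Strict Implicit. Unset Printing Implicit Defensive.
Import GRing.Theory.
Local Open Scope ring_scope.

Definition is_ideal (R : comNzRingType) (I : R -> Prop) : Prop :=
  [/\ I 0, (forall x y, I x -> I y -> I (x + y)) & (forall r x, I x -> I (r * x))].

Definition zero_divisor (R : comNzRingType) (x : R) : Prop :=
  exists y : R, y != 0 /\ x * y = 0.
Definition regular (R : comNzRingType) (x : R) : Prop := ~ zero_divisor x.

Definition maximal_ideal (R : comNzRingType) (M : R -> Prop) : Prop :=
  [/\ is_ideal M, ~ M 1 &
      forall I : R -> Prop, is_ideal I -> (forall x, M x -> I x) ->
        (forall x, I x <-> M x) \/ (forall x, I x)].

Definition local_ring_with (R : comNzRingType) (m : R -> Prop) : Prop :=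
  maximal_ideal m /\ forall M, maximal_ideal M -> forall x, M x <-> m x.

Definition jacobson (R : comNzRingType) (x : R) : Prop :=
  forall M : R -> Prop, maximal_ideal M -> M x.

Definition fin_gen (R : comNzRingType) (I : R -> Prop) : Prop :=
  exists (n : nat) (g : 'I_n -> R), (forall i, I (g i)) /\
    forall x, I x -> exists c : 'I_n -> R, x = \sum_(i < n) c i * g i.

Definition regular_ideal (R : comNzRingType) (I : R -> Prop) : Prop :=
  exists x, I x /\ regular x.

(* I is invertible: I (R : I) = R, computed in the total ring of quotients
   Q(R) = Reg(R)^{-1} R.  Since I (R : I) is contained in R, this means that
   1 = sum_i x_i y_i with y_i in I and x_i in (R : I); writing the x_i over a
   common regular denominator s, x_i = a_i / s, the condition x_i in (R : I)
   reads  a_i * z in s R  for all z in I. *)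
Definition invertible_ideal (R : comNzRingType) (I : R -> Prop) : Prop :=
  exists (s : R) (n : nat) (a y : 'I_n -> R),
    [/\ regular s, (forall i, I (y i)),
        (forall i z, I z -> exists r, a i * z = s * r) &
        \sum_(i < n) a i * y i = s].

Definition prufer (R : comNzRingType) : Prop :=
  forall I : R -> Prop, is_ideal I -> fin_gen I -> regular_ideal I ->
    invertible_ideal I.

(* Ideals packaged with a boolean carrier (needed to build the subring). *)
Record bideal (R : comNzRingType) := BIdeal {
  bideal_pred :> pred R;
  bideal_is_ideal : is_ideal (fun x => bideal_pred x) }.

(* Amalgamated algebra  A ⋈^f J = {(a, f a + j) : a in A, j in J}. *)
Section Amalgamation.
Variables (A B : comNzRingType) (f : {rmorphism A -> B}) (J : bideal B).

Definition amal_pred : pred (A * B)%type := fun x => J (x.2 - f x.1).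

Lemma amal_closed : subring_closed amal_pred.
Proof.
have [P0 PD PM] := bideal_is_ideal J.
have PN : forall x, J x -> J (- x).
  by move=> x Px; rewrite -mulN1r; apply: PM.
split; rewrite /amal_pred /=.
- rewrite unfold_in /= rmorph1 subrr; exact P0.
- move=> [x1 x2] [y1 y2]; rewrite !unfold_in /= => Hx Hy.
  have -> : x2 - y2 - f (x1 - y1) = (x2 - f x1) + - (y2 - f y1).
    by rewrite rmorphB !opprB addrACA [RHS]addrACA (addrC (- y2)).
  by apply: PD => //; apply: PN.
- move=> [x1 x2] [y1 y2]; rewrite !unfold_in /= => Hx Hy.
  have -> : x2 * y2 - f (x1 * y1) = y2 * (x2 - f x1) + f x1 * (y2 - f y1).
    by rewrite rmorphM !mulrBr (mulrC y2 x2) (mulrC y2 (f x1)) addrA subrK.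
  by apply: PD; apply: PM.
Qed.

HB.instance Definition _ :=
  GRing.isSubringClosed.Build (A * B)%type amal_pred amal_closed.

Record amalgam := Amalgam { amal_val :> (A * B)%type;
                            amal_valP : amal_val \in amal_pred }.
HB.instance Definition _ := [isSub for amal_val].
HB.instance Definition _ := [Choice of amalgam by <:].
HB.instance Definition _ := [SubChoice_isSubComNzRing of amalgam by <:].

End Amalgamation.

(* A local ring R is Prüfer iff its regular elements are comparable with
   every element under divisibility: comparability makes every finitely
   generated regular ideal principal with a regular generator, and
   conversely an invertible ideal of a local ring is principal (one term of
   a decomposition of 1 is a unit), which applied to (x, y) yields the
   comparability.  Since J ⊆ f(m), the amalgamation is again local with
   maximal ideal m ⋈ J, and (a, b) is a unit iff a is one.  Comparability
   in A ⋈ J then reduces to comparability in A, tested on diagonal elements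
   (a, f a), together with J = f(a)J for regular a, tested against the
   elements (0, j); conversely u divides v in A ⋈ J as soon as their first
   components divide and J = f(u.1)J. *)

From HB Require Import structures.
From mathcomp Require Import all_boot all_order all_algebra.
From mathcomp Require Import boolp classical_sets.
Set Implicit Arguments.
Unset Strict Implicit.
Unset Printing Implicit Defensive.
Import GRing.Theory.
Local Open Scope classical_set_scope.
Local Open Scope ring_scope.

Section Divisibility.
Variable S : comNzRingType.
Implicit Types x y z : S.

Definition dvdr x y := exists c, y = x * c.
Definition is_unit x := exists y, x * y = 1.

Definition regular_comparable := forall x y, regular x -> dvdr x y \/ dvdr y x.
Definition nonunit_addr_closed := forall x y, is_unit (x + y) -> is_unit x \/ is_unit y.

Lemma dvdr_refl x : dvdr x x.
Proof. by exists 1; rewrite mulr1. Qed.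

Lemma dvdr_trans y x z : dvdr x y -> dvdr y z -> dvdr x z.
Proof. by move=> [c ->] [d ->]; exists (c * d); rewrite mulrA. Qed.

Lemma dvdr0 x : dvdr x 0.
Proof. by exists 0; rewrite mulr0. Qed.

Lemma dvdrD x y z : dvdr x y -> dvdr x z -> dvdr x (y + z).
Proof. by move=> [c ->] [d ->]; exists (c + d); rewrite mulrDr. Qed.

Lemma dvdr_mull x y z : dvdr x y -> dvdr x (z * y).
Proof. by move=> [c ->]; exists (z * c); rewrite mulrCA. Qed.

Lemma regular_mulI {x} : regular x -> injective ( *%R x).
Proof.
move=> rx y z /eqP; rewrite -subr_eq0 -mulrBr => /eqP xyz.
apply/eqP; rewrite -subr_eq0; apply/negPn/negP => yz.
by apply: rx; exists (y - z).
Qed.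

Lemma regular_dvdr {x y} : dvdr x y -> regular y -> regular x.
Proof.
move=> [c ->] ry [z [z0 xz]]; apply: ry; exists z; split=> //.
by rewrite mulrAC xz mul0r.
Qed.

Lemma not_regular0 : ~ regular (0 : S).
Proof. by apply; exists 1; rewrite oner_neq0 mul0r. Qed.

Lemma is_unit1 : is_unit 1.
Proof. by exists 1; rewrite mulr1. Qed.

Lemma is_unitMl x y : is_unit (x * y) -> is_unit x.
Proof. by move=> [z xyz]; exists (y * z); rewrite mulrA. Qed.

Lemma not_is_unit0 : ~ is_unit 0.
Proof. by move=> [z]; rewrite mul0r => /eqP; rewrite eq_sym oner_eq0. Qed.

Definition ideal2 x y z := exists p q, z = p * x + q * y.

Lemma ideal2_is_ideal x y : is_ideal (ideal2 x y).
Proof.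
split.
- by exists 0, 0; rewrite !mul0r addr0.
- move=> _ _ [p [q ->]] [p' [q' ->]]; exists (p + p'), (q + q').
  by rewrite !mulrDl addrACA.
- by move=> r _ [p [q ->]]; exists (r * p), (r * q); rewrite mulrDr !mulrA.
Qed.

Lemma ideal2_fin_gen x y : fin_gen (ideal2 x y).
Proof.
exists 2%N, (fun i : 'I_2 => if val i == 0%N then x else y); split.
  by case=> [[|[|]]] //= _; [exists 1, 0 | exists 0, 1];
     rewrite mul1r mul0r ?addr0 ?add0r.
move=> _ [p [q ->]]; exists (fun i : 'I_2 => if val i == 0%N then p else q).
by rewrite big_ord_recr big_ord1.
Qed.

Lemma invertible_principal (I : S -> Prop) d :
  I d -> regular d -> (forall x, I x -> dvdr d x) -> invertible_ideal I.
Proof.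
move=> Id rd dI; exists d, 1%N, (fun _ => 1), (fun _ => d); split=> //.
- by move=> _ _ /dI[r ->]; exists r; rewrite mul1r.
- by rewrite big_ord1 mul1r.
Qed.

Lemma regular_common_divisor z (s : seq S) : regular_comparable -> regular z ->
  exists2 d, d \in z :: s & regular d /\ {in z :: s, forall y, dvdr d y}.
Proof.
move=> cmp rz; elim: s => [|y s [d ds [rd dvd]]].
  exists z; first exact: mem_head.
  by split=> // y; rewrite inE => /eqP ->; apply: dvdr_refl.
have mem t : t \in z :: y :: s = (t == y) || (t \in z :: s).
  by rewrite !in_cons orbCA.
have [dy | yd] := cmp d y rd.
- exists d; first by rewrite mem ds orbT.
  by split=> // t; rewrite mem => /orP[/eqP -> // | /dvd].
- exists y; first by rewrite mem eqxx.
  split=> [|t]; first exact: regular_dvdr yd rd.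
  rewrite mem => /orP[/eqP -> | /dvd]; first exact: dvdr_refl.
  exact: dvdr_trans.
Qed.

Lemma comparable_prufer : regular_comparable -> prufer S.
Proof.
move=> cmp I _ [n [g [Ig gen]]] [z [Iz rz]].
have [d dI [rd dvd]] := regular_common_divisor [seq g i | i <- enum 'I_n] cmp rz.
apply: (@invertible_principal _ d) => //.
  by move: dI; rewrite in_cons => /orP[/eqP -> // | /mapP[i _ ->]].
move=> _ /gen[c ->]; apply: big_ind => [||i _]; [exact: dvdr0 | exact: dvdrD |].
by apply/dvdr_mull/dvd; rewrite in_cons map_f ?mem_enum ?orbT.
Qed.

Section NonunitAddrClosed.
Hypothesis nonunitD : nonunit_addr_closed.

Lemma is_unit_sum n (r : 'I_n -> S) :
  is_unit (\sum_(i < n) r i) -> exists i, is_unit (r i).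
Proof.
elim: n r => [|n IH] r; first by rewrite big_ord0 => /not_is_unit0.
rewrite big_ord_recr => /nonunitD[/IH[i ui] | ur]; last by exists ord_max.
by exists (widen_ord (leqnSn n) i).
Qed.

(* One of the [r i], where [a i * y i = s * r i], is a unit; its [y i]
   then generates the invertible ideal. *)
Lemma invertible_principal_local {I : S -> Prop} : invertible_ideal I ->
  exists e, [/\ I e, regular e & forall z, I z -> dvdr e z].
Proof.
move=> [s [n [a [y [rs Iy ha sum_ay]]]]].
have [r ayr] := choice (fun i => ha i (y i) (Iy i)).
have sum_r : \sum_(i < n) r i = 1.
  apply: (regular_mulI rs); rewrite mulr_sumr mulr1 -[RHS]sum_ay.
  by apply: eq_bigr => i _; rewrite ayr.
have [k [w rw]] : exists k, is_unit (r k).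
  by apply: is_unit_sum; rewrite sum_r; apply: is_unit1.
exists (y k); split=> // [[c [c0 yc]] | t It].
  have rc : r k * c = 0.
    by apply: (regular_mulI rs); rewrite mulr0 mulrA -ayr -mulrA yc mulr0.
  by move/eqP: c0; apply; rewrite -[c]mul1r -rw mulrAC rc mul0r.
have [u au] := ha k t It.
have tr : t * r k = u * y k.
  by apply: (regular_mulI rs); rewrite mulrCA -ayr mulrCA mulrA au -mulrA.
by exists (u * w); rewrite mulrA (mulrC (y k)) -tr -mulrA rw mulr1.
Qed.

Lemma prufer_comparable : prufer S -> regular_comparable.
Proof.
move=> hpr x y rx.
have Ix : ideal2 x y x by exists 1, 0; rewrite mul1r mul0r addr0.
have Iy : ideal2 x y y by exists 0, 1; rewrite mul1r mul0r add0r.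
have [e [[p [q epq]] re eI]] := invertible_principal_local
  (hpr _ (ideal2_is_ideal x y) (ideal2_fin_gen x y) (ex_intro _ x (conj Ix rx))).
have [[u xu] [v yv]] := (eI x Ix, eI y Iy).
have : u * p + v * q = 1.
  apply: (regular_mulI re); rewrite mulr1 mulrDr !mulrA -xu -yv.
  by rewrite (mulrC x) (mulrC y).
move=> /(eq_ind_r is_unit is_unit1).
case/nonunitD=> [/is_unitMl[u' uu'] | /is_unitMl[v' vv']].
  by left; exists (u' * v); rewrite yv xu -mulrA (mulrA u) uu' mul1r.
by right; exists (v' * u); rewrite xu yv -mulrA (mulrA v) vv' mul1r.
Qed.

Lemma prufer_iff_comparable : prufer S <-> regular_comparable.
Proof. by split; [exact: prufer_comparable | exact: comparable_prufer]. Qed.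

End NonunitAddrClosed.
End Divisibility.

Arguments is_unit1 {S}.

Section Ideals.
Variable S : comNzRingType.
Implicit Types (I : S -> Prop) (x y : S).

Lemma idealM I r x : is_ideal I -> I x -> I (r * x).
Proof. by case=> _ _; apply. Qed.

Lemma idealD I x y : is_ideal I -> I x -> I y -> I (x + y).
Proof. by case=> _ + _; apply. Qed.

Lemma idealN I x : is_ideal I -> I x -> I (- x).
Proof. by move=> hI Ix; rewrite -mulN1r; apply: idealM. Qed.

Lemma ideal_unit I x : is_ideal I -> I x -> is_unit x -> forall y, I y.
Proof.
by move=> hI Ix [z xz] y; rewrite -[y]mulr1 -xz mulrCA mulrC; apply: idealM.
Qed.

Lemma bideal0 (I : bideal S) : I 0.
Proof. by case: I => ? []. Qed.

Lemma bidealD (I : bideal S) x y : I x -> I y -> I (x + y).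
Proof. exact: idealD (bideal_is_ideal I). Qed.

Lemma bidealM (I : bideal S) r x : I x -> I (r * x).
Proof. exact: idealM (bideal_is_ideal I). Qed.

Lemma bidealN (I : bideal S) x : I x -> I (- x).
Proof. exact: idealN (bideal_is_ideal I). Qed.

(* Krull: [Zorn_bigcup] needs the union of the empty chain, i.e. the empty
   set, to be admissible as well. *)
Lemma ideal_sub_maximal I : is_ideal I -> ~ I 1 ->
  exists2 M, maximal_ideal M & forall x, I x -> M x.
Proof.
move=> hI nI1.
pose P X := X `<=` set0 \/ [/\ is_ideal X, ~ X 1 & I `<=` X].
have chainP F : F `<=` P -> total_on F subset -> P (\bigcup_(X in F) X).
  move=> FP Ftot.
  have [[X0 FX0 [t0 X0t0]] | F0] := pselect (exists2 X, F X & exists t, X t);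
    last by left=> t [X FX Xt]; apply: F0; exists X => //; exists t.
  have ideals X : F X -> (exists t, X t) -> [/\ is_ideal X, ~ X 1 & I `<=` X].
    by move=> /FP[X0' [t /X0'] | //].
  have [iX0 _ IX0] := ideals X0 FX0 (ex_intro _ t0 X0t0).
  right; split.
  - split; first by exists X0 => //; case: iX0.
    + move=> x y [X1 FX1 X1x] [X2 FX2 X2y].
      have [iX1 _ _] := ideals X1 FX1 (ex_intro _ x X1x).
      have [iX2 _ _] := ideals X2 FX2 (ex_intro _ y X2y).
      have [X12 | X21] := Ftot X1 X2 FX1 FX2.
        by exists X2 => //; apply: idealD => //; apply: X12.
      by exists X1 => //; apply: idealD => //; apply: X21.
    + move=> r x [X1 FX1 X1x]; exists X1 => //.
      by have [iX1 _ _] := ideals X1 FX1 (ex_intro _ x X1x); apply: idealM.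
  - by move=> [X FX X1]; have [] := ideals X FX (ex_intro _ 1 X1).
  - by move=> x Ix; exists X0 => //; apply: IX0.
have [M [PM maxM]] := Zorn_bigcup chainP.
have [M0 | [iM nM1 IM]] := PM.
  have [I0 _ _] := hI.
  exfalso; apply: (maxM I); last by right; split=> // x.
  by split=> [x /M0 [] | /(_ 0 I0)/M0 []].
exists M => //; split=> // X iX MX.
have [X1 | nX1] := pselect (X 1); first by right; exact: ideal_unit iX X1 is_unit1.
have [XM | nXM] := pselect (X `<=` M); first by left=> x; split; [apply: XM | apply: MX].
by exfalso; apply: (maxM X); [split | right; split=> // x /IM /MX].
Qed.

End Ideals.

Section LocalRing.
Variables (A : comNzRingType) (m : A -> Prop).
Hypothesis hA : local_ring_with m.
Implicit Types x y : A.

Lemma local_ideal : is_ideal m.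
Proof. by have [[]] := hA. Qed.

Lemma local_nonunit x : ~ is_unit x -> m x.
Proof.
move=> nux; pose xA y := exists r, y = r * x.
have ixA : is_ideal xA.
  split; first by exists 0; rewrite mul0r.
    by move=> _ _ [r ->] [s ->]; exists (r + s); rewrite mulrDl.
  by move=> r _ [s ->]; exists (r * s); rewrite mulrA.
have nxA1 : ~ xA 1 by move=> [r r1]; apply: nux; exists r; rewrite mulrC -r1.
have [M maxM xAM] := ideal_sub_maximal ixA nxA1.
by apply/(hA.2 M maxM)/xAM; exists 1; rewrite mul1r.
Qed.

Lemma local_unit x : ~ m x -> is_unit x.
Proof. by move=> mx; apply: contrapT => /local_nonunit. Qed.

Lemma local_mem_nonunit x : m x -> ~ is_unit x.
Proof.
by have [[_ nm1 _] _] := hA; move=> mx /(ideal_unit local_ideal mx)/(_ 1).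
Qed.

Lemma local_nonunit_addr_closed : nonunit_addr_closed A.
Proof.
move=> x y uxy; apply: contrapT => /not_orP[nux nuy].
by apply: local_mem_nonunit uxy; apply: idealD local_ideal _ _; apply: local_nonunit.
Qed.

Lemma local_unitD x y : is_unit x -> m y -> is_unit (x + y).
Proof.
move=> ux my; apply: local_unit => mxy; apply: local_mem_nonunit ux.
by rewrite -(addrK y x); apply: idealD local_ideal mxy (idealN local_ideal my).
Qed.

End LocalRing.

Section Amalgamation.
Variables (A B : comNzRingType) (m : A -> Prop).
Variables (f : {rmorphism A -> B}) (J : bideal B).
Hypothesis hA : local_ring_with m.
Hypothesis J_proper : ~ J 1.
Hypothesis J_sub_image : forall j, J j -> exists a, j = f a.

Local Notation R := (amalgam f J).

Definition amal_mk a b (h : J (b - f a)) : R := @Amalgam _ _ f J (a, b) h.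
Definition amal_fst (u : R) : A := (amal_val u).1.
Definition amal_snd (u : R) : B := (amal_val u).2.

Lemma amal_diag_subproof a : J (f a - f a).
Proof. by rewrite subrr; apply: bideal0. Qed.

Definition amal_diag a : R := amal_mk (amal_diag_subproof a).

Definition J_divisible_by (b : B) := forall x, J x -> exists j, J j /\ x = b * j.

Lemma J_sub_image_max j : J j -> exists2 k, j = f k & m k.
Proof.
move=> Jj; have [k jk] := J_sub_image Jj; exists k => //.
apply: contrapT => /(local_unit hA)[k' kk']; apply: J_proper.
by rewrite -(rmorph1 f) -kk' rmorphM mulrC -jk; apply: bidealM.
Qed.

Lemma unit_addJ a j : is_unit a -> J j -> is_unit (f a + j).
Proof.
move=> ua /J_sub_image_max[k -> mk]; have [w aw] := local_unitD hA ua mk.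
by exists (f w); rewrite -rmorphD -rmorphM aw rmorph1.
Qed.

Lemma J_divisible_by_unit a : is_unit a -> J_divisible_by (f a).
Proof.
move=> [a' aa'] x Jx; exists (f a' * x); split; first exact: bidealM.
by rewrite mulrA -rmorphM aa' rmorph1 mul1r.
Qed.

Lemma amalgam_unit (u : R) : is_unit (amal_fst u) -> is_unit u.
Proof.
case: u => [[a b] Jba]; rewrite /amal_fst /= => -[a' aa'].
have [b' bb'] : is_unit b.
  by rewrite -(subrK (f a) b) addrC; apply: unit_addJ => //; exists a'.
have Jb'a' : J (b' - f a').
  have -> : b' - f a' = b' * f a' * - (b - f a).
    rewrite opprB mulrBr -mulrA -rmorphM (mulrC a') aa' rmorph1 mulr1.
    by rewrite mulrAC (mulrC b') bb' mul1r.
  by apply/bidealM/bidealN.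
by exists (amal_mk Jb'a'); apply: val_inj; congr pair.
Qed.

Lemma amalgam_nonunit_addr_closed : nonunit_addr_closed R.
Proof.
move=> u v [w uvw].
have : is_unit (amal_fst u + amal_fst v).
  by exists (amal_fst w); apply: (congr1 amal_fst uvw).
by case/(local_nonunit_addr_closed hA) => /amalgam_unit; [left | right].
Qed.

Lemma amalgam_regular_fst (u : R) : regular u -> regular (amal_fst u).
Proof.
case: u => [[a b] Jba] ru; rewrite /amal_fst /= => -[c [c0 ac]]; apply: ru.
have [fcJ0 | fcJ] := pselect (f c * (b - f a) = 0).
  exists (amal_diag c); split.
    by apply: contra c0 => /eqP/(congr1 amal_fst) c0; apply/eqP.
  apply: val_inj; rewrite /= /amal_mk /=; congr pair => //.
  by rewrite -(subrK (f a) b) mulrDl -rmorphM ac rmorph0 addr0 mulrC.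
have [k bak] := J_sub_image Jba.
have Jck : J (0 - f (c * k)) by rewrite sub0r rmorphM -bak; apply/bidealN/bidealM.
exists (amal_mk Jck); split.
  apply/eqP => /(congr1 amal_fst) ck0; apply: fcJ.
  by rewrite bak -rmorphM [c * k]ck0 rmorph0.
by apply: val_inj; congr pair; rewrite /= ?mulrA ?ac ?mul0r ?mulr0.
Qed.

Lemma amal_fst_dvdr (u v : R) : dvdr u v -> dvdr (amal_fst u) (amal_fst v).
Proof. by move=> [c uc]; exists (amal_fst c); apply: (congr1 amal_fst uc). Qed.

Lemma amalgam_dvdr (u v : R) : J_divisible_by (f (amal_fst u)) ->
  dvdr (amal_fst u) (amal_fst v) -> dvdr u v.
Proof.
case: u v => [[x1 x2] Jx] [[y1 y2] Jy]; rewrite /amal_fst /= => Jdiv [c y1c].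
have [j1 [Jj1 xj1]] := Jdiv _ Jx.
have [|s1 [Js1 s1E]] := Jdiv ((y2 - f y1) - (x2 - f x1) * f c).
  by apply: bidealD Jy _; apply/bidealN; rewrite mulrC; apply: bidealM.
have [w w1] : is_unit (1 + j1).
  by rewrite -(rmorph1 f); exact: unit_addJ is_unit1 Jj1.
(* [x2 = f x1 * (1 + j1)], so [(c, f c + w * s1)] is the quotient. *)
have Jq : J ((f c + w * s1) - f c) by rewrite addrC addKr; apply: bidealM.
exists (amal_mk Jq); apply: val_inj; rewrite /= /amal_mk /=; congr pair => //.
have x2E : x2 = f x1 * (1 + j1) by rewrite mulrDr mulr1 -xj1 addrC subrK.
rewrite mulrDr {2}x2E -mulrA (mulrA (1 + j1)) w1 mul1r -s1E y1c rmorphM.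
have -> : x2 * f c = f x1 * f c + (x2 - f x1) * f c by rewrite mulrBl addrC subrK.
by rewrite -(addrA y2) -opprD [RHS]addrC subrK.
Qed.

Lemma amalgam_comparable : regular_comparable A ->
  (forall a, regular a -> J_divisible_by (f a)) -> regular_comparable R.
Proof.
move=> cmp Jdiv u v /amalgam_regular_fst ru.
have [uv | vu] := cmp _ (amal_fst v) ru; [left | right]; apply: amalgam_dvdr => //.
  exact: Jdiv.
exact/Jdiv/(regular_dvdr vu).
Qed.

Section RegularImage.
Hypothesis f_regular : forall a, regular a -> regular (f a).

Lemma amal_diag_regular a : regular a -> regular (amal_diag a).
Proof.
move=> ra [[[c d] Jdc] [z0 az]]; apply/negP: z0; apply/negPn/eqP.
have [ac0 fad0] : a * c = 0 /\ f a * d = 0.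
  by split; [exact (congr1 amal_fst az) | exact (congr1 amal_snd az)].
apply: val_inj; congr pair.
  by apply: (regular_mulI ra); rewrite mulr0.
by apply: (regular_mulI (f_regular ra)); rewrite mulr0.
Qed.

Lemma comparable_amalgam_fst : regular_comparable R -> regular_comparable A.
Proof.
move=> cmp x y rx.
by case: (cmp (amal_diag x) (amal_diag y) (amal_diag_regular rx))
   => /amal_fst_dvdr; [left | right].
Qed.

Lemma comparable_amalgam_J a :
  regular_comparable R -> regular a -> J_divisible_by (f a).
Proof.
move=> cmp ra x Jx.
have J0x : J (x - f 0) by rewrite rmorph0 subr0.
have [[[[c1 c2] Jc] ac] | [c a0c]] := cmp _ (amal_mk J0x) (amal_diag_regular ra).
  have [ac1 xac2] : 0 = a * c1 /\ x = f a * c2.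
    by split; [exact (congr1 amal_fst ac) | exact (congr1 amal_snd ac)].
  have c10 : c1 = 0 by apply: (regular_mulI ra); rewrite -ac1 mulr0.
  by exists c2; split=> //; have := Jc; rewrite unfold_in /= c10 rmorph0 subr0.
have a0 : a = 0 * amal_fst c := congr1 amal_fst a0c.
by case: (@not_regular0 A); rewrite -(mul0r (amal_fst c)) -a0.
Qed.

End RegularImage.
End Amalgamation.

(* Of [hReg] only the inclusion [f(Reg(A)) ⊆ Reg(B)] is used. *)
Theorem theorem2p2 (A B : comNzRingType) (m : A -> Prop)
  (hA : local_ring_with m)
  (f : {rmorphism A -> B}) (J : bideal B)
  (hJproper : ~ J 1)
  (hJrad : forall x, J x -> jacobson x)
  (hJf : forall j, J j -> exists a : A, j = f a)
  (hReg : forall b : B, regular b <-> exists a : A, regular a /\ b = f a) :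
  prufer (amalgam f J) <->
  (prufer A /\
   forall a : A, m a -> regular a ->
     forall x : B, J x <-> exists j, J j /\ x = f a * j).
Proof.
have f_regular a : regular a -> regular (f a) by move=> ra; apply/hReg; exists a.
have A_prufer := prufer_iff_comparable (local_nonunit_addr_closed hA).
apply: (iff_trans (prufer_iff_comparable (amalgam_nonunit_addr_closed hA hJproper hJf))).
split=> [cmpR | [prA Jdiv]].
- split; first by apply/A_prufer; apply: comparable_amalgam_fst f_regular cmpR.
  move=> a _ ra x; split; first exact: comparable_amalgam_J.
  by case=> j [Jj ->]; apply: bidealM.
- apply: (amalgam_comparable hA hJproper hJf); first exact/A_prufer.
  move=> a ra; have [ma | /(local_unit hA)] := pselect (m a).
    by move=> x /(Jdiv a ma ra).
  exact: J_divisible_by_unit.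
Qed.
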